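(* Let $2\le n\le r$ and let $(X_1,\dots,X_n)$ be a $\{0,1\}$-valued $n$-Markov exchangeable sequence with $P(X_1=0)=1$, represented by the point $w=(w_{0,a,b})_{(a,b)\in\mathcal L_n}$. Then $(X_1,\dots,X_n)$ is $r$-extendible if and only if $w\in\operatorname{conv}\{\gamma^{(n)}_R:R\in\Phi(0,r)\}$. In particular $\operatorname{conv}\{\gamma^{(n)}_R:R\in\Phi(0,r+1)\}\subseteq\operatorname{conv}\{\gamma^{(n)}_R:R\in\Phi(0,r)\}$.
   Context: For a binary sequence its transition count matrix is $N=(n_{i,j})_{i,j\in\{0,1\}}$ with $n_{i,j}$ the number of indices $t$ with $(x_t,x_{t+1})=(i,j)$. $\Phi(0,m)$ is the set of transition count matrices of sequences in $\{0,1\}^m$ starting with $0$. A sequence $(X_1,\dots,X_m)$ is $m$-Markov exchangeable if any two sequences in $\{0,1\}^m$ with the same first value and the same transition count matrix have the same probability. An $n$-Markov exchangeable sequence is $r$-extendible ($r\ge n$) if there is an $r$-Markov exchangeable sequence $(Y_1,\dots,Y_r)$ with $(Y_1,\dots,Y_n)$ equal in law to $(X_1,\dots,X_n)$. Let $\mathcal L_n=\{(a,b)\in\mathbb Z_{\ge0}^2:a+b\le n-2\}\cup\{(n-1,0)\}$; for a distribution of $(X_1,\dots,X_m)$, $m\ge n$, $w_{0,a,b}=P\big((X_1,\dots,X_{a+b+2})=(0^{a+1},1^{b+1})\big)$ for $a+b\le n-2$ and $w_{0,n-1,0}=P(X_1=\dots=X_n=0)$. For $m\ge n$ and $R\in\Phi(0,m)$,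 $h_R$ is the uniform distribution on sequences in $\{0,1\}^m$ starting with $0$ with transition count matrix $R$, and $\gamma^{(n)}_R=(w_{0,a,b})_{(a,b)\in\mathcal L_n}$ computed under $h_R$. *)

(* Binary values: false = 0, true = 1. *)
From HB Require Import structures.
From mathcomp Require Import all_boot all_order all_algebra.
Set Implicit Arguments. Unset Strict Implicit. Unset Printing Implicit Defensive.
Import Order.TTheory GRing.Theory Num.Theory.
Local Open Scope ring_scope.

Definition tcount (s : seq bool) (i j : bool) : nat :=
  count (fun p : bool * bool => (p.1 == i) && (p.2 == j)) (zip s (behead s)).
Definition tcm (s : seq bool) : nat * nat * nat * nat :=
  (tcount s false false, tcount s false true, tcount s true false, tcount s true true).

Definition Phi0 (m : nat) (N : nat * nat * nat * nat) : Prop :=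
  exists x : m.-tuple bool, head true x = false /\ tcm x = N.

Definition is_dist (R : realFieldType) (m : nat) (mu : m.-tuple bool -> R) : Prop :=
  (forall x, 0 <= mu x) /\ \sum_(x : m.-tuple bool) mu x = 1.

Definition markov_exch (R : realFieldType) (m : nat) (mu : m.-tuple bool -> R) : Prop :=
  forall x y : m.-tuple bool,
    head true x = head true y -> tcm x = tcm y -> mu x = mu y.

Definition prefix_prob (R : realFieldType) (m : nat) (mu : m.-tuple bool -> R)
  (s : seq bool) : R :=
  \sum_(x : m.-tuple bool | take (size s) x == s) mu x.

Definition extendible (R : realFieldType) (n r : nat) (mu : n.-tuple bool -> R) : Prop :=
  exists nu : r.-tuple bool -> R,
    is_dist nu /\ markov_exch nu /\
    forall y : n.-tuple bool, mu y = prefix_prob nu y.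

Definition inLn (n a b : nat) : bool :=
  (a + b <= n - 2)%N || ((a == n.-1) && (b == 0%N)).

(* the point w = (w_{0,a,b}) (meaningful for (a,b) in L_n) *)
Definition wvec (R : realFieldType) (n m : nat) (mu : m.-tuple bool -> R)
  (ab : nat * nat) : R :=
  if (ab.1 + ab.2 <= n - 2)%N
  then prefix_prob mu (nseq ab.1.+1 false ++ nseq ab.2.+1 true)
  else prefix_prob mu (nseq n false).

Definition hR (R : realFieldType) (m : nat) (N : nat * nat * nat * nat)
  (x : m.-tuple bool) : R :=
  if (head true x == false) && (tcm x == N)
  then (#|[pred y : m.-tuple bool | (head true y == false) && (tcm y == N)]|%:R)^-1
  else 0.

Definition gammaR (R : realFieldType) (n m : nat) (N : nat * nat * nat * nat) :
  nat * nat -> R := wvec n (@hR R m N).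

Definition Gset (R : realFieldType) (n m : nat) (g : nat * nat -> R) : Prop :=
  exists N, Phi0 m N /\ g = gammaR R n m N.

Definition in_conv (R : realFieldType) (n : nat) (S : (nat * nat -> R) -> Prop)
  (v : nat * nat -> R) : Prop :=
  exists (k : nat) (c : 'I_k -> R) (p : 'I_k -> nat * nat -> R),
    (forall i, 0 <= c i) /\ \sum_(i < k) c i = 1 /\ (forall i, S (p i)) /\
    forall a b, inLn n a b -> v (a, b) = \sum_(i < k) c i * p i (a, b).

From HB Require Import structures.
From mathcomp Require Import all_boot all_order all_algebra.
Import Order.TTheory GRing.Theory Num.Theory.

Set Implicit Arguments.
Unset Strict Implicit.
Unset Printing Implicit Defensive.

(* A Markov exchangeable law on {0,1}^m starting with 0 is constant on each
   class of sequences with the same first letter and transition counts, so it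
   is the mixture of the uniform laws h_N on these classes weighted by itself;
   applying the linear map "point w" shows that its w lies in the convex hull
   of the gamma^(n)_N.  Conversely a convex combination of the h_N, N in
   Phi(0,r), is an r-Markov exchangeable law, and it extends mu as soon as it
   has the same point w as mu: the point w determines an n-Markov exchangeable
   law starting with 0.  This uniqueness rests on a normal form: every word
   starting with 0 has the same length and transition counts as one of
   0^(a+1), 0^(a+1) 1^(b+1) (01)^j or 0^(a+1) 1^(b+1) (01)^j 0, and the
   prefix probabilities of these words follow from the coordinates of w by the
   splitting P(s) = P(s0) + P(s1).  The inclusion of hulls follows by taking
   the r-marginal of the law built from a point of the (r+1)-hull. *)

Lemma tcount_cons x l i j : tcount (x :: l) i j =
  (if l is y :: _ then ((x == i) && (y == j) : nat) else 0) + tcount l i j.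
Proof. by case: l. Qed.

Lemma tcount_cat x s z i j :
  tcount ((x :: s) ++ z) i j = tcount (x :: s) i j + tcount z i j +
    (if z is y :: _ then ((last x s == i) && (y == j) : nat) else 0).
Proof.
elim: s x => [|y s IH] x.
  by rewrite /= tcount_cons; case: z => [|y z] /=; rewrite ?addn0 // addnC.
by rewrite cat_cons tcount_cons IH [in RHS]tcount_cons /= !addnA.
Qed.

Lemma tcount_rcons x s c i j :
  tcount (rcons (x :: s) c) i j = tcount (x :: s) i j + ((last x s == i) && (c == j) : nat).
Proof. by rewrite -cats1 tcount_cat /= addn0. Qed.

(* Switches 0->1 and 1->0 alternate, so their balance is fixed by the
   first and the last letter. *)
Lemma tcount_switch_balance x s :
  tcount (x :: s) false true + x = tcount (x :: s) true false + last x s.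
Proof.
elim: s x => [|y s IH] x //.
rewrite !(tcount_cons x) /=; have := IH y.
by case: x; case: y => /=; rewrite ?add0n ?add1n ?addn0 ?addn1 ?addSn ?addnS => ->.
Qed.

Lemma tcount_stutter p c t i j :
  tcount (p ++ c :: c :: t) i j = ((c == i) && (c == j) : nat) + tcount (p ++ c :: t) i j.
Proof.
elim: p => [|x p IH]; first by rewrite /= tcount_cons.
rewrite !cat_cons !(tcount_cons x) IH.
by case: p {IH} => [|y p] /=; rewrite !addnA (addnC (_ && _)).
Qed.

Definition tceq (s t : seq bool) : Prop := forall i j, tcount s i j = tcount t i j.

Lemma tceq_tcm s t : tceq s t -> tcm s = tcm t.
Proof. by move=> H; rewrite /tcm !H. Qed.

Lemma tcm_tceq s t : tcm s = tcm t -> tceq s t.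
Proof. by rewrite /tcm => [[]] *; case; case. Qed.

Lemma tceq_sym s t : tceq s t -> tceq t s.
Proof. by move=> H i j; rewrite H. Qed.

Lemma tceq_trans s t u : tceq s t -> tceq t u -> tceq s u.
Proof. by move=> H1 H2 i j; rewrite H1 H2. Qed.

Lemma tceq_last x s t : tceq (x :: s) (x :: t) -> last x s = last x t.
Proof.
move=> H; have := tcount_switch_balance x s; have := tcount_switch_balance x t.
rewrite !H => ->; move/eqP; rewrite eqn_add2l.
by case: (last x s); case: (last x t).
Qed.

Lemma tceq_rcons x y s t c : tceq (x :: s) (y :: t) -> last x s = last y t ->
  tceq (rcons (x :: s) c) (rcons (y :: t) c).
Proof. by move=> H hl i j; rewrite !tcount_rcons H hl. Qed.

(* Normal forms of transition classes of sequences starting with 0: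
   Z a = 0^(a+1),  W1 a j b = 0^(a+1) 1^(b+1) (01)^j,  W0 a j b = W1 a j b ++ [0]. *)

Definition alt (j : nat) : seq bool := flatten (nseq j [:: false; true]).
Definition Z (a : nat) : seq bool := nseq a.+1 false.
Definition W1 (a j b : nat) : seq bool := nseq a.+1 false ++ nseq b.+1 true ++ alt j.
Definition W0 (a j b : nat) : seq bool := rcons (W1 a j b) false.

Definition normal_form (rho : seq bool) : Prop :=
  [\/ exists a, rho = Z a, exists a j b, rho = W1 a j b
    | exists a j b, rho = W0 a j b].

Lemma alt_S j : alt j.+1 = alt j ++ [:: false; true].
Proof. by elim: j => // j; rewrite /alt /= => ->. Qed.

Lemma size_W1 a j b : size (W1 a j b) = (a + b + j * 2).+2.
Proof.
have size_alt : size (alt j) = (j * 2)%N.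
  by elim: j => // j IH; rewrite alt_S size_cat IH mulSn addnC.
by rewrite /W1 !size_cat !size_nseq size_alt !addSn !addnS addnA.
Qed.

Lemma last_W1 x a j b : last x (W1 a j b) = true.
Proof.
have last_nseqS y k (c : bool) : last y (nseq k.+1 c) = c by elim: k y => //= k IH y.
have last_alt : last true (alt j) = true by elim: j => // j IH; rewrite alt_S last_cat.
by rewrite /W1 !last_cat !last_nseqS last_alt.
Qed.

Lemma normal_form_head rho : normal_form rho -> head true rho = false.
Proof. by case=> [[a ->]|[a [j [b ->]]]|[a [j [b ->]]]]. Qed.

Lemma rcons_Z_false a : rcons (Z a) false = Z a.+1.
Proof. by rewrite /Z; elim: a => //= a ->. Qed.

Lemma rcons_Z_true a : rcons (Z a) true = W1 a 0 0.
Proof. by rewrite /Z /W1 /alt -cats1. Qed.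

Lemma rcons_W0_true a j b : rcons (W0 a j b) true = W1 a j.+1 b.
Proof. by rewrite /W0 /W1 alt_S -!cats1 -!catA. Qed.

Lemma rcons_W1_true a j b : tceq (rcons (W1 a j b) true) (W1 a j b.+1).
Proof.
move=> i k.
have E : W1 a j b = false :: (nseq a false ++ nseq b.+1 true ++ alt j) by [].
rewrite E tcount_rcons -E.
have -> : last false (nseq a false ++ nseq b.+1 true ++ alt j) = true.
  by have := last_W1 true a j b; rewrite E.
rewrite [W1 a j b.+1](_ : _ = nseq a.+1 false ++ true :: true :: (nseq b true ++ alt j)) //.
by rewrite tcount_stutter addnC.
Qed.

Lemma rcons_W0_false a j b : tceq (rcons (W0 a j b) false) (W0 a.+1 j b).
Proof.
move=> i k.
have E : W0 a j b = false :: rcons (nseq a false ++ nseq b.+1 true ++ alt j) false by [].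
rewrite E tcount_rcons last_rcons -E.
rewrite [W0 a.+1 j b](_ : _ = [::] ++ false :: false ::
  rcons (nseq a false ++ nseq b.+1 true ++ alt j) false) //.
by rewrite tcount_stutter /= -E addnC.
Qed.

Lemma normal_form_rcons rho c : normal_form rho -> exists2 rho', normal_form rho' &
  [/\ size rho' = (size rho).+1, tceq rho' (rcons rho c) & last true rho' = c].
Proof.
case=> [[a ->]|[a [j [b ->]]]|[a [j [b ->]]]]; case: c.
- exists (W1 a 0 0); first by constructor 2; exists a, 0%N, 0%N.
  by rewrite -rcons_Z_true size_rcons last_rcons.
- exists (Z a.+1); first by constructor 1; exists a.+1.
  by rewrite -rcons_Z_false size_rcons last_rcons.
- exists (W1 a j b.+1); first by constructor 2; exists a, j, b.+1.
  by split; rewrite ?size_W1 ?addnS ?last_W1 //; apply/tceq_sym/rcons_W1_true.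
- exists (W0 a j b); first by constructor 3; exists a, j, b.
  by rewrite /W0 size_rcons last_rcons.
- exists (W1 a j.+1 b); first by constructor 2; exists a, j.+1, b.
  by rewrite -rcons_W0_true size_rcons last_rcons.
- exists (W0 a.+1 j b); first by constructor 3; exists a.+1, j, b.
  by split; rewrite /W0 ?last_rcons //; apply/tceq_sym/rcons_W0_false.
Qed.

Lemma normal_form_exists s : (0 < size s)%N -> head true s = false ->
  exists2 rho, normal_form rho & size rho = size s /\ tceq rho s.
Proof.
suff H : (0 < size s)%N -> head true s = false -> exists2 rho, normal_form rho &
    [/\ size rho = size s, tceq rho s & last true rho = last true s].
  by move=> s0 h0; have [rho nf [? ? _]] := H s0 h0; exists rho.
elim/last_ind: s => [//|t c IH] _.
case: t IH => [|x t] IH /=.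
  by move=> ->; exists (Z 0); first by constructor 1; exists 0%N.
move=> hx; have [rho nf [sr tr lr]] := IH erefl hx.
have [rho' nf' [sr' tr' lr']] := normal_form_rcons c nf.
exists rho' => //; split; first by rewrite sr' sr size_rcons.
  case: rho {nf nf' lr' sr'} sr tr lr tr' => [//|y rho] _ tr lr tr'.
  exact: tceq_trans tr' (tceq_rcons c tr lr).
by rewrite lr' last_rcons.
Qed.

Local Open Scope ring_scope.

Section PrefixProbabilities.
Variable R : realFieldType.

Definition starts0 (m : nat) (f : m.-tuple bool -> R) : Prop :=
  forall x : m.-tuple bool, head true x = true -> f x = 0.

Lemma prefix_prob_tuple m (f : m.-tuple bool -> R) (y : m.-tuple bool) :
  prefix_prob f y = f y.
Proof.
rewrite /prefix_prob size_tuple (eq_bigl (pred1 y)) ?big_pred1_eq // => x.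
by rewrite take_oversize ?size_tuple.
Qed.

Lemma prefix_prob_nil m (f : m.-tuple bool -> R) : prefix_prob f [::] = \sum_x f x.
Proof. by apply: eq_bigl => x; rewrite take0. Qed.

Lemma prefix_prob_split m (f : m.-tuple bool -> R) s : (size s < m)%N ->
  prefix_prob f s = prefix_prob f (rcons s false) + prefix_prob f (rcons s true).
Proof.
move=> hs; rewrite /prefix_prob !size_rcons.
rewrite (bigID (fun x : m.-tuple bool => nth false x (size s))) /= addrC.
congr (_ + _); apply: eq_bigl => x; rewrite (take_nth false) ?size_tuple //;
  rewrite eqseq_rcons; by case: (nth false x (size s)); rewrite ?andbT ?andbF.
Qed.

Lemma prefix_prob_mix m (I : finType) (c : I -> R) (g : I -> m.-tuple bool -> R) s :
  prefix_prob (fun x => \sum_i c i * g i x) s = \sum_i c i * prefix_prob (g i) s.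
Proof. by rewrite /prefix_prob exchange_big; apply: eq_bigr => i _; rewrite mulr_sumr. Qed.

Lemma prefix_ind m (P : seq bool -> Prop) :
  (forall s, size s = m -> P s) ->
  (forall s, (size s < m)%N -> P (rcons s false) -> P (rcons s true) -> P s) ->
  forall s, (size s <= m)%N -> P s.
Proof.
move=> Pm Pstep s hs; move: (m - size s)%N (subnKC hs) => d; elim: d s {hs}.
  by move=> s hs; apply: Pm; rewrite -hs addn0.
move=> d IH s hs.
have lt_sm : (size s < m)%N by rewrite -hs addnS ltnS leq_addr.
by apply: Pstep => //; apply: IH; rewrite size_rcons addSnnS.
Qed.

Lemma prefix_prob_marginal n m (A : n.-tuple bool -> R) (B : m.-tuple bool -> R) :
  (n <= m)%N -> (forall y, A y = prefix_prob B y) ->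
  forall s, (size s <= n)%N -> prefix_prob A s = prefix_prob B s.
Proof.
move=> nm AB; apply: prefix_ind => [s /eqP hs|s hs IH0 IH1].
  by rewrite -[s]/(tval (Tuple hs)) prefix_prob_tuple AB.
by rewrite prefix_prob_split // [RHS]prefix_prob_split ?IH0 ?IH1 // (leq_trans hs).
Qed.

Lemma prefix_prob_tceq m (f : m.-tuple bool -> R) : markov_exch f ->
  forall s t, (0 < size s)%N -> size s = size t -> (size s <= m)%N ->
  head true s = head true t -> tceq s t -> prefix_prob f s = prefix_prob f t.
Proof.
move=> fmx s t s0 st /(@prefix_ind m (fun s => forall t, (0 < size s)%N ->
  size s = size t -> head true s = head true t -> tceq s t ->
  prefix_prob f s = prefix_prob f t)); apply => // {s t s0 st}.
  move=> s hs t _ st hh htc.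
  have /eqP ht : size t = m by rewrite -st.
  move/eqP: hs => hs.
  rewrite -[s]/(tval (Tuple hs)) -[t]/(tval (Tuple ht)) !prefix_prob_tuple.
  exact/fmx/tceq_tcm.
move=> [//|x s] hs IH0 IH1 [//|y t] _ st /= hxy; subst y => htc.
have hl := tceq_last htc.
rewrite prefix_prob_split // [RHS]prefix_prob_split -?st //.
by rewrite (IH0 (rcons (x :: t) false)) ?(IH1 (rcons (x :: t) true)) ?size_rcons ?st //;
  apply: tceq_rcons.
Qed.

Lemma dist_starts0 m (f : m.-tuple bool -> R) : is_dist f -> (0 < m)%N ->
  prefix_prob f [:: false] = 1 -> starts0 f.
Proof.
move=> [f0 f1] m0 pf x hx.
have : prefix_prob f [:: true] = 0.
  have := @prefix_prob_split m f [::] m0; rewrite prefix_prob_nil f1 /= pf.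
  by move/esym/eqP; rewrite -subr_eq0 addrC addKr => /eqP.
rewrite /prefix_prob => /psumr_eq0P; apply => //=.
case: x hx => -[|y x] /= sx hy; first by move: m0; rewrite -(eqP sx).
by rewrite take0 hy.
Qed.

Lemma marginal_markov k m (nu : m.-tuple bool -> R) : (0 < k <= m)%N ->
  is_dist nu -> markov_exch nu ->
  is_dist (fun y : k.-tuple bool => prefix_prob nu y) /\
  markov_exch (fun y : k.-tuple bool => prefix_prob nu y).
Proof.
move=> /andP[k0 km] [nu0 nu1] nux; split; [split|].
- by move=> y; apply: sumr_ge0 => x _; apply: nu0.
- rewrite -(prefix_prob_nil (fun y : k.-tuple bool => prefix_prob nu y)).
  by rewrite (@prefix_prob_marginal k m _ nu km) // prefix_prob_nil.
- move=> x y hh ht; apply: prefix_prob_tceq; rewrite ?size_tuple //.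
  exact: tcm_tceq.
Qed.

Lemma marginal_starts0 k m (nu : m.-tuple bool -> R) : (0 < k)%N -> starts0 nu ->
  starts0 (fun y : k.-tuple bool => prefix_prob nu y).
Proof.
move=> k0 nu0 y hy; rewrite /prefix_prob big1 // => x /eqP hx; apply: nu0.
rewrite -hy -hx size_tuple; move: (tval x) => {y hy hx}.
by case: k k0 => // k _ [].
Qed.

End PrefixProbabilities.

Section UniformLaws.
Variable R : realFieldType.

Lemma hR_ge0 m N (x : m.-tuple bool) : 0 <= hR R N x.
Proof. by rewrite /hR; case: ifP => // _; rewrite invr_ge0 ler0n. Qed.

Lemma hR_starts0 m N : starts0 (@hR R m N).
Proof. by move=> x; rewrite /hR => ->. Qed.

Lemma hR_markov m N : markov_exch (@hR R m N).
Proof. by move=> x y hh ht; rewrite /hR hh ht. Qed.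

Lemma hR_sum m N : Phi0 m N -> \sum_(x : m.-tuple bool) hR R N x = 1.
Proof.
move=> [x0 [h0 t0]]; rewrite /hR -big_mkcond /=.
set P := [pred y : m.-tuple bool | (head true y == false) && (tcm y == N)].
rewrite (eq_bigl (mem P)) // sumr_const -(mulr_natr (_^-1)) mulVf //.
by rewrite pnatr_eq0 -lt0n; apply/card_gt0P; exists x0; rewrite inE h0 t0 !eqxx.
Qed.

Lemma uniform_mixture m (I : finType) (c : I -> R) (N : I -> nat * nat * nat * nat) :
  (forall i, 0 <= c i) -> \sum_i c i = 1 -> (forall i, Phi0 m (N i)) ->
  let nu := fun x : m.-tuple bool => \sum_i c i * hR R (N i) x in
  [/\ is_dist nu, markov_exch nu & starts0 nu].
Proof.
move=> c0 c1 PN nu; split; [split| |].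
- by move=> x; apply: sumr_ge0 => i _; apply: mulr_ge0 => //; apply: hR_ge0.
- rewrite /nu exchange_big /= -[RHS]c1; apply: eq_bigr => i _.
  by rewrite -mulr_sumr hR_sum ?mulr1.
- by move=> x y hh ht; apply: eq_bigr => i _; congr (_ * _); apply: hR_markov.
- by move=> x hx; apply: big1 => i _; rewrite hR_starts0 ?mulr0.
Qed.

Lemma markov_uniform_decomposition m (nu : m.-tuple bool -> R) :
  markov_exch nu -> starts0 nu ->
  forall y, \sum_x nu x * hR R (tcm x) y = nu y.
Proof.
move=> nux nu0 y; case hy: (head true y).
  by rewrite nu0 // big1 // => x _; rewrite hR_starts0 // mulr0.
set P := [pred u : m.-tuple bool | (head true u == false) && (tcm u == tcm y)].
have Py : y \in P by rewrite inE hy !eqxx.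
rewrite (eq_bigr (fun x => if x \in P then nu y * (#|P|%:R)^-1 else 0)).
  rewrite -big_mkcond sumr_const -(mulr_natr (_ * _)) -mulrA mulVf ?mulr1 //.
  by rewrite pnatr_eq0 -lt0n; apply/card_gt0P; exists y.
move=> x _; rewrite /hR inE /= hy eqxx /= [tcm y == _]eq_sym.
case hx: (head true x); first by rewrite nu0 // mul0r.
case: eqP => [ht|_]; last by rewrite mulr0.
by rewrite ht (nux x y) ?hx ?hy.
Qed.

End UniformLaws.

Section PointW.
Variable R : realFieldType.

Lemma wvec_prefix n m1 m2 (f : m1.-tuple bool -> R) (g : m2.-tuple bool -> R) ab :
  (2 <= n)%N -> (forall s, (size s <= n)%N -> prefix_prob f s = prefix_prob g s) ->
  wvec n f ab = wvec n g ab.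
Proof.
move=> n2 fg; rewrite /wvec; case: ifP => hab; apply: fg; last by rewrite size_nseq.
by rewrite size_cat !size_nseq addSn addnS -add2n -leq_subRL.
Qed.

Lemma eq_wvec n m (f g : m.-tuple bool -> R) ab : f =1 g -> wvec n f ab = wvec n g ab.
Proof. by move=> fg; rewrite /wvec; case: ifP => _; apply: eq_bigr => x _. Qed.

Lemma wvec_mix n m (I : finType) (c : I -> R) (g : I -> m.-tuple bool -> R) ab :
  wvec n (fun x => \sum_i c i * g i x) ab = \sum_i c i * wvec n (g i) ab.
Proof. by rewrite /wvec; case: ifP => _; apply: prefix_prob_mix. Qed.

Lemma in_conv_ext n S (v v' : nat * nat -> R) :
  (forall a b, inLn n a b -> v (a, b) = v' (a, b)) -> in_conv n S v' -> in_conv n S v.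
Proof.
move=> vv' [k [c [p [c0 [c1 [pS pv]]]]]]; exists k, c, p; do 3!split => //.
by move=> a b hab; rewrite vv' // pv.
Qed.

Lemma in_conv_fin n S (I : finType) (c : I -> R) (p : I -> nat * nat -> R) v :
  (forall i, 0 <= c i) -> \sum_i c i = 1 -> (forall i, S (p i)) ->
  (forall a b, inLn n a b -> v (a, b) = \sum_i c i * p i (a, b)) -> in_conv n S v.
Proof.
move=> c0 c1 pS pv; have reindex (F : I -> R) : \sum_(i < #|I|) F (enum_val i) = \sum_i F i.
  by rewrite -big_enum_val; apply: eq_bigl.
exists #|I|, (c \o enum_val), (p \o enum_val); split; first by move=> i; apply: c0.
split; first by rewrite reindex.
by split=> [i|a b hab]; [apply: pS | rewrite pv // -reindex].
Qed.

End PointW.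

Section Uniqueness.
Variables (R : realFieldType) (n m : nat).
Variables (A : n.-tuple bool -> R) (B : m.-tuple bool -> R).
Hypotheses (n2 : (2 <= n)%N) (nm : (n <= m)%N).
Hypotheses (Ax : markov_exch A) (Bx : markov_exch B) (A0 : starts0 A) (B0 : starts0 B).
Hypothesis AB_w : forall a b, inLn n a b -> wvec n A (a, b) = wvec n B (a, b).

Let D (s : seq bool) : R := prefix_prob A s - prefix_prob B s.

Lemma D_tceq s t : (0 < size s)%N -> size s = size t -> (size s <= n)%N ->
  head true s = head true t -> tceq s t -> D s = D t.
Proof.
move=> s0 st sn hh htc; rewrite /D (prefix_prob_tceq Ax s0 st sn hh htc).
by rewrite (prefix_prob_tceq Bx s0 st (leq_trans sn nm) hh htc).
Qed.

Lemma D_split s : (size s < n)%N -> D s = D (rcons s false) + D (rcons s true).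
Proof.
move=> sn; rewrite /D (prefix_prob_split A sn) (prefix_prob_split B (leq_trans sn nm)).
by rewrite opprD addrACA.
Qed.

Lemma D_W1_base a b : (size (W1 a 0 b) <= n)%N -> D (W1 a 0 b) = 0.
Proof.
rewrite size_W1 mul0n addn0 -add2n -leq_subRL // => hab.
have := AB_w (a := a) (b := b); rewrite /inLn /wvec /= hab /D /W1 cats0.
by move=> ->; [apply: subrr|].
Qed.

Lemma D_zeros : D (nseq n false) = 0.
Proof.
have hn : (n.-1 + 0 <= n - 2)%N = false.
  by case: n n2 => [|[|k]] // _; rewrite addn0 /= subSS subSS subn0 ltnn.
have := AB_w (a := n.-1) (b := 0); rewrite /inLn /wvec /= hn !eqxx orbT /D.
by move=> ->; [apply: subrr|].
Qed.

Definition W1_vanish (j : nat) : Prop :=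
  forall a b, (size (W1 a j b) <= n)%N -> D (W1 a j b) = 0.
Definition W0_vanish (j : nat) : Prop :=
  forall a b, (size (W0 a j b) <= n)%N -> D (W0 a j b) = 0.

(* D (W1 a j b) = D (W0 a j b) + D (W1 a j b.+1). *)
Lemma W0_vanish_of_W1 j : W1_vanish j -> W0_vanish j.
Proof.
move=> W1j a b; rewrite /W0 size_rcons => hs.
have size_W1S : size (W1 a j b.+1) = (size (W1 a j b)).+1 by rewrite !size_W1 addnS.
have := D_split hs; rewrite -/(W0 a j b).
rewrite (@D_tceq (rcons (W1 a j b) true) (W1 a j b.+1)) ?size_rcons ?size_W1S //;
  last exact: rcons_W1_true.
by rewrite !W1j ?(ltnW hs) ?size_W1S // addr0 => <-.
Qed.

(* D (W0 a j b) = D (W0 a.+1 j b) + D (W1 a j.+1 b). *)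
Lemma W1_vanish_of_W0 j : W0_vanish j -> W1_vanish j.+1.
Proof.
move=> W0j a b hs.
have size_W1S : size (W1 a j.+1 b) = (size (W0 a j b)).+1.
  by rewrite -rcons_W0_true size_rcons.
have size_W0S : size (W0 a.+1 j b) = (size (W0 a j b)).+1.
  by rewrite /W0 !size_rcons !size_W1.
have hs1 : (size (W0 a j b) < n)%N by rewrite -size_W1S.
have := D_split hs1; rewrite rcons_W0_true.
rewrite (@D_tceq (rcons (W0 a j b) false) (W0 a.+1 j b)) ?size_rcons //;
  last exact: rcons_W0_false.
rewrite !W0j ?(ltnW hs1) ?size_W0S // add0r; first by move<-.
by move: hs; rewrite size_W1S /W0 size_rcons.
Qed.

Lemma W_vanish j : W1_vanish j /\ W0_vanish j.
Proof.
have W1_0 : W1_vanish 0 by move=> a b; apply: D_W1_base.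
elim: j => [|j [_ W0j]]; first by split; last exact: W0_vanish_of_W1.
by have W1j := W1_vanish_of_W0 W0j; split; last exact: W0_vanish_of_W1.
Qed.

(* D vanishes on words of length n by the normal form theorem, which for a
   tuple of length n says that A agrees with the n-marginal of B. *)
Lemma w_determines_law (y : n.-tuple bool) : A y = prefix_prob B y.
Proof.
have y0 : (0 < size y)%N by rewrite size_tuple (leq_trans _ n2).
case hy: (head true y).
  by rewrite A0 // (marginal_starts0 (ltnW n2) B0).
have [rho nf [sr tr]] := normal_form_exists y0 hy.
have rho_head := normal_form_head nf.
have D_rho : D rho = 0.
  case: nf (sr) => [[a ->]|[a [j [b ->]]]|[a [j [b ->]]]]; rewrite size_tuple => size_rho.
  - by move: size_rho; rewrite /Z size_nseq => ->; apply: D_zeros.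
  - by apply: (proj1 (W_vanish j)); rewrite size_rho.
  - by apply: (proj2 (W_vanish j)); rewrite size_rho.
have : D y = 0.
  rewrite -D_rho; apply: D_tceq (tceq_sym tr); rewrite ?sr ?size_tuple ?hy ?rho_head //.
  exact: ltnW.
by move/eqP; rewrite /D subr_eq0 prefix_prob_tuple => /eqP.
Qed.

End Uniqueness.

Section Hull.
Variable R : realFieldType.

Lemma w_in_conv n m (nu : m.-tuple bool -> R) : (0 < m)%N ->
  is_dist nu -> markov_exch nu -> starts0 nu -> in_conv n (Gset n m) (wvec n nu).
Proof.
move=> m0 [nu_ge0 nu_sum] nux nu0.
pose x0 : m.-tuple bool := nseq_tuple m false.
have x0_head : head true x0 = false by rewrite /x0 /=; case: (m) m0.
pose zero_start (x : m.-tuple bool) := if head true x == false then x else x0.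
have zero_start_head x : head true (zero_start x) = false.
  by rewrite /zero_start; case: eqP.
apply: (@in_conv_fin _ _ _ _ nu (fun x => gammaR R n m (tcm (zero_start x)))) => //.
  by move=> x; exists (tcm (zero_start x)); split => //; exists (zero_start x).
move=> a b _; rewrite /gammaR -wvec_mix; apply: eq_wvec => y.
rewrite -[LHS](markov_uniform_decomposition nux nu0); apply: eq_bigr => x _.
case hx: (head true x); last by rewrite /zero_start hx.
by rewrite nu0 // !mul0r.
Qed.

Lemma in_conv_mixture n m (v : nat * nat -> R) : in_conv n (Gset n m) v ->
  exists nu : m.-tuple bool -> R, [/\ is_dist nu, markov_exch nu, starts0 nu &
    forall a b, inLn n a b -> v (a, b) = wvec n nu (a, b)].
Proof.
case=> k [c [p [c_ge0 [c_sum [pG pv]]]]].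
have [N hN] := fin_all_exists pG.
have [nu_dist nux nu0] := uniform_mixture c_ge0 c_sum (fun i => proj1 (hN i)).
eexists; split; [exact: nu_dist | exact: nux | exact: nu0 |] => a b hab.
by rewrite pv // wvec_mix; apply: eq_bigr => i _; rewrite (proj2 (hN i)).
Qed.

End Hull.

Theorem mainTheorem12 (R : realFieldType) (n r : nat) (mu : n.-tuple bool -> R) :
  (2 <= n)%N -> (n <= r)%N ->
  is_dist mu -> markov_exch mu -> prefix_prob mu [:: false] = 1 ->
  (extendible r mu <-> in_conv n (Gset n r) (wvec n mu)) /\
  (forall v : nat * nat -> R, in_conv n (Gset n r.+1) v -> in_conv n (Gset n r) v).
Proof.
move=> n2 nr mu_dist mux mu_false.
have n0 : (0 < n)%N by apply: ltnW.
have r0 : (0 < r)%N by apply: leq_trans nr.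
have mu0 := dist_starts0 mu_dist n0 mu_false.
split; first split.
- case=> nu [nu_dist [nux mu_marg]].
  have prefixes := prefix_prob_marginal nr mu_marg.
  have nu0 : starts0 nu by apply: dist_starts0 => //; rewrite -prefixes.
  apply: in_conv_ext (w_in_conv n r0 nu_dist nux nu0) => a b _.
  exact: wvec_prefix n2 prefixes.
- case/in_conv_mixture=> nu [nu_dist nux nu0 w_nu]; exists nu; do !split => //.
  exact: w_determines_law.
- move=> v /in_conv_mixture [nu [nu_dist nux nu0 w_nu]].
  have r_le : (0 < r <= r.+1)%N by rewrite r0 leqnSn.
  have [marg_dist margx] := marginal_markov r_le nu_dist nux.
  apply: in_conv_ext (w_in_conv n r0 marg_dist margx (marginal_starts0 r0 nu0)).
  move=> a b hab; rewrite w_nu //; apply: wvec_prefix n2 _ => s sn.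
  by rewrite (@prefix_prob_marginal _ r r.+1 _ nu (leqnSn r)) // (leq_trans sn nr).
Qed.
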